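(* For all integers $n\geq 3$, $s_2(n)<1$, where $s_2(n)=g(n-1)+g(n+1)-f(n-1)f(n+1)$.
   Context: For integers $m\geq 2$, with $x=\pi\sqrt{m-1}$, $y=\pi\sqrt{m}$, $z=\pi\sqrt{m+1}$, define \[ f(m)=e^{x-2y+z}\frac{(x^6-x^5-1)\,y^{16}\,(z^6-z^5-1)}{x^8(y^6-y^5+1)^2z^8},\qquad g(m)=e^{x-2y+z}\frac{(x^6-x^5+1)\,y^{16}\,(z^6-z^5+1)}{x^8(y^6-y^5-1)^2z^8}. \] *)

From Stdlib Require Import Reals.
Open Scope R_scope.

Definition xm (m : nat) : R := PI * sqrt (INR m - 1).
Definition ym (m : nat) : R := PI * sqrt (INR m).
Definition zm (m : nat) : R := PI * sqrt (INR m + 1).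

Definition f (m : nat) : R :=
  let x := xm m in let y := ym m in let z := zm m in
  exp (x - 2 * y + z) *
  ((x ^ 6 - x ^ 5 - 1) * y ^ 16 * (z ^ 6 - z ^ 5 - 1)) /
  (x ^ 8 * (y ^ 6 - y ^ 5 + 1) ^ 2 * z ^ 8).

Definition g (m : nat) : R :=
  let x := xm m in let y := ym m in let z := zm m in
  exp (x - 2 * y + z) *
  ((x ^ 6 - x ^ 5 + 1) * y ^ 16 * (z ^ 6 - z ^ 5 + 1)) /
  (x ^ 8 * (y ^ 6 - y ^ 5 - 1) ^ 2 * z ^ 8).

Definition s2 (n : nat) : R := g (n - 1) + g (n + 1) - f (n - 1) * f (n + 1).

(* Write f(m) = e^(x-2y+z) (y^4/(x^2 z^2)) P-(1/x) P-(1/z) / P+(1/y)^2 with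
   P±(u) = 1 - u ± u^6.  Then g(m) = f(m) K(m) where K = r(1/x) r(1/z) r(1/y)^2
   and r = P+/P- >= 1, so with f_i = f(n -+ 1) and K_i = K(n -+ 1)
     1 - s2(n) = (1 - f_1)(1 - f_2) - f_1 (K_1 - 1) - f_2 (K_2 - 1).
   It therefore suffices that 1 - f(m) is of order m^(-3/2) while K(m) - 1 is of
   order m^(-3).  For m >= 5 this is proved in closed form: the second difference
   x - 2y + z = pi (sqrt(m-1) - 2 sqrt m + sqrt(m+1)) is at most -pi/(4 m^(3/2)),
   which gives f(m) <= 1 - 1/(4 m^(3/2)), and r(u) - 1 = O(u^6) gives
   K(m) <= 1 + 1/(90 (m-1)^3).  For n = 3, 4, 5 the values f(m), K(m), 2 <= m <= 6,
   are bounded numerically from four-digit brackets of pi and sqrt k, using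
   e^t >= 1 + t + t^2/2 + t^3/6. *)

From Pilot Require Import Defs.
From Stdlib Require Import Reals Lra Lia Factorial.
From Coquelicot Require Rcomplements.
Open Scope R_scope.

Definition Pm (u : R) : R := 1 - u - u ^ 6.
Definition Pp (u : R) : R := 1 - u + u ^ 6.
Definition ratio (u : R) : R := Pp u / Pm u.

Lemma pow6_small u : 0 <= u <= 1/3 -> 0 <= u ^ 6 <= 1/729.
Proof.
  intros Hu. split; [apply pow_le; lra|].
  replace (1/729) with ((1/3) ^ 6) by field. apply pow_incr; lra.
Qed.

Lemma Pm_pos u : 0 <= u <= 1/3 -> 0 < Pm u.
Proof. intros Hu. pose proof (pow6_small u Hu). unfold Pm. lra. Qed.

Lemma Pp_pos u : 0 <= u <= 1/3 -> 0 < Pp u.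
Proof. intros Hu. pose proof (pow6_small u Hu). unfold Pp. lra. Qed.

Lemma Pm_antitone u v : 0 <= u <= v -> Pm v <= Pm u.
Proof.
  intros Huv. assert (u ^ 6 <= v ^ 6) by (apply pow_incr; lra). unfold Pm. lra.
Qed.

Lemma Pp_antitone u v : 0 <= u <= v -> v <= 1/3 -> Pp v <= Pp u.
Proof.
  intros Huv Hv.
  assert (H3 : v ^ 3 - u ^ 3 <= (v - u) / 3).
  { replace (v ^ 3 - u ^ 3) with ((v - u) * (v ^ 2 + v * u + u ^ 2)) by ring.
    assert (v ^ 2 + v * u + u ^ 2 <= 1/3) by nra.
    nra. }
  assert (0 <= u ^ 3 <= v ^ 3) by (split; [apply pow_le | apply pow_incr]; lra).
  assert (v ^ 3 <= 1/27) by (replace (1/27) with ((1/3) ^ 3) by field; apply pow_incr; lra).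
  assert (v ^ 6 - u ^ 6 <= v - u).
  { replace (v ^ 6 - u ^ 6) with ((v ^ 3 - u ^ 3) * (v ^ 3 + u ^ 3)) by ring. nra. }
  unfold Pp. lra.
Qed.

Lemma ratio_ge_1 u : 0 <= u <= 1/3 -> 1 <= ratio u.
Proof.
  intros Hu. pose proof (Pm_pos u Hu). pose proof (pow6_small u Hu).
  unfold ratio. apply Rcomplements.Rle_div_r; [lra|]. unfold Pm, Pp. lra.
Qed.

Lemma ratio_monotone u v : 0 <= u <= v -> v <= 1/3 -> ratio u <= ratio v.
Proof.
  intros Huv Hv.
  assert (Pu : 0 < Pm u) by (apply Pm_pos; lra).
  assert (Pv : 0 < Pm v) by (apply Pm_pos; lra).
  assert (u ^ 6 <= v ^ 6) by (apply pow_incr; lra).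
  assert (0 <= u ^ 6) by (apply pow_le; lra).
  unfold ratio. apply Rcomplements.Rle_div_l; [lra|].
  replace (Pp v / Pm v * Pm u) with (Pp v * Pm u / Pm v) by (field; lra).
  apply Rcomplements.Rle_div_r; [lra|].
  unfold Pp, Pm in *. nra.
Qed.

Lemma ratio_le u : 0 <= u <= 1/6 -> ratio u <= 1 + 5/2 * u ^ 6.
Proof.
  intros Hu.
  assert (H6 : 0 <= u ^ 6 <= 1/729) by (apply pow6_small; lra).
  assert (Pu : 4/5 <= Pm u) by (unfold Pm; lra).
  unfold ratio. apply Rcomplements.Rle_div_l; [lra|].
  unfold Pp, Pm in *. nra.
Qed.

(** * Factorisation of f and g *)

Lemma pow6_factor_minus x : x <> 0 -> x ^ 6 - x ^ 5 - 1 = x ^ 6 * Pm (/ x).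
Proof. intros Hx. unfold Pm. field. exact Hx. Qed.

Lemma pow6_factor_plus x : x <> 0 -> x ^ 6 - x ^ 5 + 1 = x ^ 6 * Pp (/ x).
Proof. intros Hx. unfold Pp. field. exact Hx. Qed.

Definition fxyz (x y z : R) : R :=
  exp (x - 2 * y + z) * (y ^ 4 / (x ^ 2 * z ^ 2))
  * (Pm (/ x) * Pm (/ z) / Pp (/ y) ^ 2).

Definition kxyz (x y z : R) : R := ratio (/ x) * ratio (/ z) * ratio (/ y) ^ 2.

Definition gf_ratio (m : nat) : R := kxyz (xm m) (ym m) (zm m).

Lemma inv_le_third x : 3 <= x -> 0 <= / x <= 1/3.
Proof.
  intros Hx. split; [left; apply Rinv_0_lt_compat; lra|].
  rewrite Rdiv_1_l. apply Rinv_le_contravar; lra.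
Qed.

Lemma inv_antitone x0 x : 0 < x0 <= x -> 0 <= / x <= / x0.
Proof.
  intros Hx. split; [left; apply Rinv_0_lt_compat; lra | apply Rinv_le_contravar; lra].
Qed.

Definition pi_lo : R := 31415 / 10000.
Definition pi_hi : R := 31416 / 10000.

Lemma PI_bracket : pi_lo < PI < pi_hi.
Proof.
  destruct (PI_2_3_7_ineq 3) as [Hlo Hhi].
  unfold PI_2_3_7_tg, tg_alt, Ratan_seq in Hlo, Hhi. simpl in Hlo, Hhi.
  unfold pi_lo, pi_hi. lra.
Qed.

Lemma xyz_ge_3 m : (2 <= m)%nat -> 3 <= xm m /\ 3 <= ym m /\ 3 <= zm m.
Proof.
  intros Hm. apply le_INR in Hm. simpl in Hm.
  pose proof PI_bracket as Hpi. unfold pi_lo, pi_hi in Hpi.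
  assert (Hsq : forall r, 1 <= r -> 1 <= sqrt r)
    by (intros r Hr; rewrite <- sqrt_1; apply sqrt_le_1_alt; exact Hr).
  pose proof (Hsq (INR m - 1) ltac:(lra)).
  pose proof (Hsq (INR m) ltac:(lra)).
  pose proof (Hsq (INR m + 1) ltac:(lra)).
  unfold xm, ym, zm. repeat split; nra.
Qed.

(* [Reals] exports a constant [f] of its own, hence the qualified [Defs.f]. *)
Lemma f_eq_fxyz m : (2 <= m)%nat -> Defs.f m = fxyz (xm m) (ym m) (zm m).
Proof.
  intros Hm. destruct (xyz_ge_3 m Hm) as (Hx & Hy & Hz).
  pose proof (Pp_pos (/ ym m) (inv_le_third _ Hy)).
  unfold Defs.f, fxyz. cbv zeta.
  rewrite 2!pow6_factor_minus, pow6_factor_plus by lra.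
  field. repeat split; lra.
Qed.

Lemma g_eq_f_mul_gf_ratio m : (2 <= m)%nat -> g m = Defs.f m * gf_ratio m.
Proof.
  intros Hm. rewrite f_eq_fxyz by exact Hm.
  destruct (xyz_ge_3 m Hm) as (Hx & Hy & Hz).
  pose proof (Pm_pos _ (inv_le_third _ Hx)).
  pose proof (Pm_pos _ (inv_le_third _ Hy)).
  pose proof (Pm_pos _ (inv_le_third _ Hz)).
  pose proof (Pp_pos _ (inv_le_third _ Hy)).
  unfold g, gf_ratio, fxyz, kxyz, ratio. cbv zeta.
  rewrite 2!pow6_factor_plus, pow6_factor_minus by lra.
  field. repeat split; lra.
Qed.

Lemma fxyz_pos x y z : 3 <= x -> 3 <= y -> 3 <= z -> 0 < fxyz x y z.
Proof.
  intros Hx Hy Hz.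
  pose proof (Pm_pos _ (inv_le_third _ Hx)). pose proof (Pm_pos _ (inv_le_third _ Hz)).
  pose proof (Pp_pos _ (inv_le_third _ Hy)).
  unfold fxyz. apply Rmult_lt_0_compat; [apply Rmult_lt_0_compat; [apply exp_pos|]|].
  - apply Rdiv_lt_0_compat; [apply pow_lt | apply Rmult_lt_0_compat; apply pow_lt]; lra.
  - apply Rdiv_lt_0_compat; [apply Rmult_lt_0_compat | apply pow_lt]; lra.
Qed.

Lemma kxyz_ge_1 x y z : 3 <= x -> 3 <= y -> 3 <= z -> 1 <= kxyz x y z.
Proof.
  intros Hx Hy Hz.
  pose proof (ratio_ge_1 _ (inv_le_third _ Hx)). pose proof (ratio_ge_1 _ (inv_le_third _ Hy)).
  pose proof (ratio_ge_1 _ (inv_le_third _ Hz)).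
  unfold kxyz. rewrite <- (Rmult_1_l 1) at 1. rewrite <- (Rmult_1_l 1) at 1.
  apply Rmult_le_compat; try lra.
  - apply Rmult_le_compat; lra.
  - rewrite <- (pow1 2). apply pow_incr. lra.
Qed.

(* [1 - (f1 k1 + f2 k2 - f1 f2) = (1 - f1) (1 - f2) - f1 (k1 - 1) - f2 (k2 - 1)] *)
Lemma bilinear_lt_1 f1 f2 k1 k2 F1 F2 K1 K2 :
  0 <= f1 <= F1 -> F1 <= 1 -> 0 <= f2 <= F2 -> F2 <= 1 ->
  1 <= k1 <= K1 -> 1 <= k2 <= K2 ->
  F1 * (K1 - 1) + F2 * (K2 - 1) < (1 - F1) * (1 - F2) ->
  f1 * k1 + f2 * k2 - f1 * f2 < 1.
Proof.
  intros. assert ((1 - F1) * (1 - F2) <= (1 - f1) * (1 - f2)) by (apply Rmult_le_compat; lra).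
  assert (f1 * (k1 - 1) <= F1 * (K1 - 1)) by (apply Rmult_le_compat; lra).
  assert (f2 * (k2 - 1) <= F2 * (K2 - 1)) by (apply Rmult_le_compat; lra).
  nra.
Qed.

Lemma s2_lt_1_of_bounds n F1 K1 F2 K2 : (3 <= n)%nat ->
  Defs.f (n - 1) <= F1 -> gf_ratio (n - 1) <= K1 ->
  Defs.f (n + 1) <= F2 -> gf_ratio (n + 1) <= K2 -> F1 <= 1 -> F2 <= 1 ->
  F1 * (K1 - 1) + F2 * (K2 - 1) < (1 - F1) * (1 - F2) -> s2 n < 1.
Proof.
  intros Hn Hf1 Hk1 Hf2 Hk2 HF1 HF2 Hnum.
  assert (Hm1 : (2 <= n - 1)%nat) by lia. assert (Hm2 : (2 <= n + 1)%nat) by lia.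
  unfold s2. rewrite !g_eq_f_mul_gf_ratio by lia.
  assert (Hpos : forall m, (2 <= m)%nat -> 0 <= Defs.f m /\ 1 <= gf_ratio m).
  { intros m Hm. rewrite f_eq_fxyz by exact Hm. destruct (xyz_ge_3 m Hm) as (? & ? & ?).
    split; [left; apply fxyz_pos | apply kxyz_ge_1]; assumption. }
  destruct (Hpos _ Hm1), (Hpos _ Hm2).
  apply (bilinear_lt_1 _ _ _ _ F1 F2 K1 K2); auto.
Qed.

(** * Numerical bounds for 2 <= m <= 6 *)

Lemma exp_le_mono a b : a <= b -> exp a <= exp b.
Proof.
  intros [Hlt | ->]; [left; apply exp_increasing, Hlt | right; reflexivity].
Qed.

Lemma exp_ge_E1 t N : 0 <= t -> E1 t N <= exp t.
Proof.
  intros Ht. apply growing_ineq; [|apply E1_cvg].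
  intros n. unfold E1. rewrite tech5.
  assert (0 <= / INR (fact (S n)) * t ^ S n).
  { apply Rmult_le_pos; [|apply pow_le; exact Ht].
    left. apply Rinv_0_lt_compat, lt_0_INR, lt_O_fact. }
  lra.
Qed.

Definition taylor3 (t : R) : R := 1 + t + t ^ 2 / 2 + t ^ 3 / 6.

Lemma exp_ge_taylor3 t : 0 <= t -> taylor3 t <= exp t.
Proof.
  intros Ht. replace (taylor3 t) with (E1 t 3) by (unfold E1, taylor3; simpl; field).
  apply exp_ge_E1, Ht.
Qed.

Definition fxyz_bound (x0 x1 y0 y1 z0 z1 : R) : R :=
  y1 ^ 4 / (x0 ^ 2 * z0 ^ 2) * (Pm (/ x1) * Pm (/ z1) / Pp (/ y0) ^ 2)
  / taylor3 (2 * y0 - x1 - z1).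

Lemma fxyz_le_bound x0 x1 y0 y1 z0 z1 x y z :
  3 <= x0 <= x -> x <= x1 -> 3 <= y0 <= y -> y <= y1 -> 3 <= z0 <= z -> z <= z1 ->
  0 <= 2 * y0 - x1 - z1 -> fxyz x y z <= fxyz_bound x0 x1 y0 y1 z0 z1.
Proof.
  intros Hx Hx1 Hy Hy1 Hz Hz1 HT.
  set (T := 2 * y0 - x1 - z1) in *.
  assert (HtT : 0 < taylor3 T).
  { unfold taylor3. pose proof (pow_le T 2 HT). pose proof (pow_le T 3 HT). lra. }
  assert (Hexp : exp (x - 2 * y + z) <= / taylor3 T).
  { apply Rle_trans with (exp (- T)).
    - apply exp_le_mono. unfold T. lra.
    - rewrite exp_Ropp. apply Rinv_le_contravar; [exact HtT | apply exp_ge_taylor3, HT]. }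
  assert (Hpow : y ^ 4 / (x ^ 2 * z ^ 2) <= y1 ^ 4 / (x0 ^ 2 * z0 ^ 2)).
  { unfold Rdiv. apply Rmult_le_compat.
    - apply pow_le. lra.
    - left. apply Rinv_0_lt_compat, Rmult_lt_0_compat; apply pow_lt; lra.
    - apply pow_incr. lra.
    - apply Rinv_le_contravar; [apply Rmult_lt_0_compat; apply pow_lt; lra|].
      apply Rmult_le_compat; try (apply pow_le; lra); apply pow_incr; lra. }
  pose proof (Pm_pos (/ x) (inv_le_third x ltac:(lra))).
  pose proof (Pm_pos (/ z) (inv_le_third z ltac:(lra))).
  pose proof (Pp_pos (/ y) (inv_le_third y ltac:(lra))).
  pose proof (Pp_pos (/ y0) (inv_le_third y0 ltac:(lra))).
  assert (Hfrac : Pm (/ x) * Pm (/ z) / Pp (/ y) ^ 2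
                  <= Pm (/ x1) * Pm (/ z1) / Pp (/ y0) ^ 2).
  { destruct (inv_antitone x x1 ltac:(lra)) as [Ux0 Ux].
    destruct (inv_antitone z z1 ltac:(lra)) as [Uz0 Uz].
    destruct (inv_antitone y0 y ltac:(lra)) as [Uy0 Uy].
    pose proof (inv_le_third _ (proj1 Hy)).
    pose proof (Pm_antitone (/ x1) (/ x) ltac:(lra)).
    pose proof (Pm_antitone (/ z1) (/ z) ltac:(lra)).
    pose proof (Pp_antitone (/ y) (/ y0) ltac:(lra) ltac:(lra)).
    unfold Rdiv. apply Rmult_le_compat.
    - apply Rmult_le_pos; lra.
    - left. apply Rinv_0_lt_compat, pow_lt. lra.
    - apply Rmult_le_compat; lra.
    - apply Rinv_le_contravar; [apply pow_lt; lra | apply pow_incr; lra]. }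
  assert (HA : 0 <= y ^ 4 / (x ^ 2 * z ^ 2)).
  { left; apply Rdiv_lt_0_compat; [apply pow_lt | apply Rmult_lt_0_compat; apply pow_lt]; lra. }
  assert (HB : 0 <= Pm (/ x) * Pm (/ z) / Pp (/ y) ^ 2).
  { left; apply Rdiv_lt_0_compat; [apply Rmult_lt_0_compat | apply pow_lt]; lra. }
  unfold fxyz, fxyz_bound. fold T.
  replace (y1 ^ 4 / (x0 ^ 2 * z0 ^ 2) * (Pm (/ x1) * Pm (/ z1) / Pp (/ y0) ^ 2) / taylor3 T)
    with (/ taylor3 T * (y1 ^ 4 / (x0 ^ 2 * z0 ^ 2)) * (Pm (/ x1) * Pm (/ z1) / Pp (/ y0) ^ 2))
    by (field; repeat split; lra).
  pose proof (exp_pos (x - 2 * y + z)).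
  apply Rmult_le_compat; [apply Rmult_le_pos; lra | lra | apply Rmult_le_compat; lra | lra].
Qed.

Lemma kxyz_antitone x0 y0 z0 x y z :
  3 <= x0 <= x -> 3 <= y0 <= y -> 3 <= z0 <= z -> kxyz x y z <= kxyz x0 y0 z0.
Proof.
  intros Hx Hy Hz.
  assert (Hr : forall a b, 3 <= a <= b -> 1 <= ratio (/ b) <= ratio (/ a)).
  { intros a b Hab. destruct (inv_antitone a b ltac:(lra)).
    split; [apply ratio_ge_1, inv_le_third; lra|].
    apply ratio_monotone; [lra | apply inv_le_third; lra]. }
  destruct (Hr _ _ Hx), (Hr _ _ Hy), (Hr _ _ Hz).
  unfold kxyz. apply Rmult_le_compat.
  - apply Rmult_le_pos; lra.
  - apply pow_le; lra.
  - apply Rmult_le_compat; lra.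
  - apply pow_incr; lra.
Qed.

Lemma sqrt_between lo hi r : 0 <= lo -> 0 <= hi -> lo ^ 2 <= r <= hi ^ 2 -> lo <= sqrt r <= hi.
Proof.
  intros Hlo Hhi Hr.
  rewrite <- (sqrt_pow2 lo Hlo), <- (sqrt_pow2 hi Hhi).
  split; apply sqrt_le_1_alt; lra.
Qed.

Definition sqrt_lo (k : nat) : R :=
  match k with
  | 1 => 1 | 2 => 14142 / 10000 | 3 => 17320 / 10000 | 4 => 2
  | 5 => 22360 / 10000 | 6 => 24494 / 10000 | 7 => 26457 / 10000 | _ => 0
  end.

Definition sqrt_hi (k : nat) : R :=
  match k with
  | 1 => 1 | 2 => 14143 / 10000 | 3 => 17321 / 10000 | 4 => 2
  | 5 => 22361 / 10000 | 6 => 24495 / 10000 | 7 => 26458 / 10000 | _ => 0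
  end.

Lemma sqrt_lo_hi k : (1 <= k <= 7)%nat ->
  1 <= sqrt_lo k /\ sqrt_lo k <= sqrt (INR k) <= sqrt_hi k.
Proof.
  intros Hk.
  assert (Hcases : (k = 1 \/ k = 2 \/ k = 3 \/ k = 4 \/ k = 5 \/ k = 6 \/ k = 7)%nat) by lia.
  repeat destruct Hcases as [-> | Hcases]; subst;
    (split; [simpl; lra | apply sqrt_between; simpl; lra]).
Qed.

Definition f_upper (m : nat) : R :=
  fxyz_bound (pi_lo * sqrt_lo (m - 1)) (pi_hi * sqrt_hi (m - 1))
             (pi_lo * sqrt_lo m) (pi_hi * sqrt_hi m)
             (pi_lo * sqrt_lo (m + 1)) (pi_hi * sqrt_hi (m + 1)).

Definition gf_ratio_upper (m : nat) : R :=
  kxyz (pi_lo * sqrt_lo (m - 1)) (pi_lo * sqrt_lo m) (pi_lo * sqrt_lo (m + 1)).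

Lemma f_gf_ratio_le_upper m : (2 <= m <= 6)%nat ->
  Defs.f m <= f_upper m /\ gf_ratio m <= gf_ratio_upper m.
Proof.
  intros Hm. pose proof PI_bracket as Hpi.
  assert (HT : 0 <= 2 * (pi_lo * sqrt_lo m) - pi_hi * sqrt_hi (m - 1) - pi_hi * sqrt_hi (m + 1)).
  { assert (Hcases : (m = 2 \/ m = 3 \/ m = 4 \/ m = 5 \/ m = 6)%nat) by lia.
    unfold pi_lo, pi_hi. repeat destruct Hcases as [-> | Hcases]; subst; simpl; lra. }
  assert (Hbr : forall k, (1 <= k <= 7)%nat ->
            3 <= pi_lo * sqrt_lo k /\ pi_lo * sqrt_lo k <= PI * sqrt (INR k) <= pi_hi * sqrt_hi k).
  { intros k Hk. destruct (sqrt_lo_hi k Hk) as (H1 & H2 & H3).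
    unfold pi_lo, pi_hi in *. repeat split; nra. }
  destruct (Hbr (m - 1)%nat ltac:(lia)) as (Hx0 & Hx & Hx1).
  destruct (Hbr m ltac:(lia)) as (Hy0 & Hy & Hy1).
  destruct (Hbr (m + 1)%nat ltac:(lia)) as (Hz0 & Hz & Hz1).
  rewrite minus_INR in Hx, Hx1 by lia. rewrite plus_INR in Hz, Hz1. simpl INR in Hx, Hx1, Hz, Hz1.
  rewrite f_eq_fxyz by lia. unfold gf_ratio, f_upper, gf_ratio_upper, xm, ym, zm.
  split; [apply fxyz_le_bound | apply kxyz_antitone]; lra.
Qed.

(* [f_upper m] and [gf_ratio_upper m], rounded up. *)
Definition f_table (m : nat) : R :=
  match m with
  | 2 => 9122 / 10000 | 3 => 9417 / 10000 | 4 => 9563 / 10000 | 5 => 9660 / 10000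
  | _ => 9729 / 10000
  end.

Definition gf_ratio_table (m : nat) : R :=
  1 + match m with
      | 2 => 3826 | 3 => 564 | 4 => 192 | 5 => 89 | _ => 49
      end / 1000000.

Lemma f_gf_ratio_le_table m : (2 <= m <= 6)%nat ->
  Defs.f m <= f_table m /\ gf_ratio m <= gf_ratio_table m.
Proof.
  intros Hm. destruct (f_gf_ratio_le_upper m Hm) as [Hf Hk].
  assert (f_upper m <= f_table m /\ gf_ratio_upper m <= gf_ratio_table m).
  { assert (Hcases : (m = 2 \/ m = 3 \/ m = 4 \/ m = 5 \/ m = 6)%nat) by lia.
    repeat destruct Hcases as [-> | Hcases]; subst;
      unfold f_upper, gf_ratio_upper, fxyz_bound, kxyz, ratio, taylor3, Pm, Pp,
        pi_lo, pi_hi, f_table, gf_ratio_table;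
      simpl; split; lra. }
  lra.
Qed.

Lemma s2_lt_1_small n : (3 <= n <= 5)%nat -> s2 n < 1.
Proof.
  intros Hn.
  destruct (f_gf_ratio_le_table (n - 1) ltac:(lia)) as [Hf1 Hk1].
  destruct (f_gf_ratio_le_table (n + 1) ltac:(lia)) as [Hf2 Hk2].
  apply (s2_lt_1_of_bounds n _ _ _ _ ltac:(lia) Hf1 Hk1 Hf2 Hk2);
    assert (Hcases : (n = 3 \/ n = 4 \/ n = 5)%nat) by lia;
    repeat destruct Hcases as [-> | Hcases]; subst;
    unfold f_table, gf_ratio_table; simpl; lra.
Qed.

(** * Bounds for m >= 5 *)

Lemma sqrt_pred_mul_sqrt_succ_bounds s a c :
  1 <= s -> 0 <= a -> 0 <= c -> a ^ 2 = s ^ 2 - 1 -> c ^ 2 = s ^ 2 + 1 ->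
  s ^ 2 - / s ^ 2 <= a * c <= s ^ 2 - / (2 * s ^ 2).
Proof.
  intros Hs Ha Hc Ha2 Hc2.
  assert (Hac2 : (a * c) ^ 2 = s ^ 4 - 1) by (rewrite Rpow_mult_distr, Ha2, Hc2; ring).
  assert (Hac : 0 <= a * c) by (apply Rmult_le_pos; lra).
  assert (Hs2 : 1 <= s ^ 2) by nra.
  set (i := / s ^ 2).
  assert (Hi : s ^ 2 * i = 1) by (unfold i; field; lra).
  assert (Hi1 : 0 < i <= 1).
  { unfold i. split; [apply Rinv_0_lt_compat | rewrite <- Rinv_1; apply Rinv_le_contravar]; lra. }
  replace (/ (2 * s ^ 2)) with (i / 2) by (unfold i; field; lra).
  replace (s ^ 4) with (s ^ 2 * s ^ 2) in Hac2 by ring.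
  split; nra.
Qed.

Lemma sqrt_pred_add_sqrt_succ_le s a c :
  1 <= s -> 0 <= a -> 0 <= c -> a ^ 2 = s ^ 2 - 1 -> c ^ 2 = s ^ 2 + 1 ->
  a + c <= 2 * s - / (4 * s ^ 3).
Proof.
  intros Hs Ha Hc Ha2 Hc2.
  destruct (sqrt_pred_mul_sqrt_succ_bounds s a c Hs Ha Hc Ha2 Hc2) as [_ Hup].
  set (i := / s ^ 2) in *.
  assert (Hi : s ^ 2 * i = 1) by (unfold i; field; lra).
  assert (Hi1 : 0 < i <= 1).
  { unfold i. split; [apply Rinv_0_lt_compat | rewrite <- Rinv_1; apply Rinv_le_contravar]; nra. }
  replace (/ (2 * s ^ 2)) with (i / 2) in Hup by (unfold i; field; lra).
  replace (/ (4 * s ^ 3)) with (i / (4 * s)) by (unfold i; field; lra).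
  set (d := 2 * s - i / (4 * s)).
  assert (Hd2 : d ^ 2 = 4 * s ^ 2 - i + (i / (4 * s)) ^ 2) by (unfold d; field; lra).
  assert (Hd : 0 <= d).
  { assert (i / (4 * s) <= 1) by (apply Rcomplements.Rle_div_l; lra). unfold d. lra. }
  assert (Hsum2 : (a + c) ^ 2 <= d ^ 2).
  { pose proof (pow2_ge_0 (i / (4 * s))).
    replace ((a + c) ^ 2) with (a ^ 2 + c ^ 2 + 2 * (a * c)) by ring. lra. }
  nra.
Qed.

Lemma exp_second_difference_le s a c p :
  1 <= s -> 0 <= a -> 0 <= c -> a ^ 2 = s ^ 2 - 1 -> c ^ 2 = s ^ 2 + 1 -> 0 <= p ->
  exp (p * a - 2 * (p * s) + p * c) <= / (1 + p / (4 * s ^ 3)).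
Proof.
  intros Hs Ha Hc Ha2 Hc2 Hp.
  pose proof (sqrt_pred_add_sqrt_succ_le s a c Hs Ha Hc Ha2 Hc2) as Hsum.
  assert (HT : 0 <= p / (4 * s ^ 3))
    by (apply Rmult_le_pos; [lra | left; apply Rinv_0_lt_compat; pose proof (pow_lt s 3); lra]).
  apply Rle_trans with (exp (- (p / (4 * s ^ 3)))).
  - apply exp_le_mono.
    replace (p * a - 2 * (p * s) + p * c) with (p * (a + c - 2 * s)) by ring.
    replace (- (p / (4 * s ^ 3))) with (p * - / (4 * s ^ 3)) by (unfold Rdiv; ring).
    apply Rmult_le_compat_l; lra.
  - rewrite exp_Ropp. apply Rinv_le_contravar; [lra | apply exp_ineq1_le].
Qed.

Lemma inv_sqrt_pred_mul_sqrt_succ_bounds s a c :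
  2 <= s -> 0 <= a -> 0 <= c -> a ^ 2 = s ^ 2 - 1 -> c ^ 2 = s ^ 2 + 1 ->
  / s ^ 2 <= / (a * c) <= / s ^ 2 + / (s ^ 2 * (s ^ 4 - 1)).
Proof.
  intros Hs Ha Hc Ha2 Hc2.
  destruct (sqrt_pred_mul_sqrt_succ_bounds s a c ltac:(lra) Ha Hc Ha2 Hc2) as [Hlo Hup].
  assert (Hs2 : 4 <= s ^ 2) by nra.
  assert (Hi : / s ^ 2 <= 1/4) by (rewrite Rdiv_1_l; apply Rinv_le_contravar; lra).
  assert (0 < / s ^ 2) by (apply Rinv_0_lt_compat; lra).
  split; [apply Rinv_le_contravar; [lra | apply Rle_trans with (s ^ 2 - / (2 * s ^ 2))]|].
  - nra.
  - assert (0 < / (2 * s ^ 2)) by (apply Rinv_0_lt_compat; lra). lra.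
  - replace (/ s ^ 2 + / (s ^ 2 * (s ^ 4 - 1))) with (/ (s ^ 2 - / s ^ 2))
      by (replace (s ^ 4) with (s ^ 2 * s ^ 2) by ring; field; split; nra).
    apply Rinv_le_contravar; lra.
Qed.

Lemma cross_term_le s a c p :
  11/5 <= s -> 0 <= a -> 0 <= c -> a ^ 2 = s ^ 2 - 1 -> c ^ 2 = s ^ 2 + 1 -> 314/100 <= p ->
  (1 - / (p * a)) * (1 - / (p * c))
  <= (1 - / (p * s)) ^ 2 * (1 + 14/100 * / (s ^ 2 * (s ^ 4 - 1))).
Proof.
  intros Hs Ha Hc Ha2 Hc2 Hp.
  destruct (inv_sqrt_pred_mul_sqrt_succ_bounds s a c ltac:(lra) Ha Hc Ha2 Hc2) as [Hlo Hup].
  assert (Hs2 : 4 <= s ^ 2) by nra.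
  assert (Ha0 : 0 < a) by nra. assert (Hc0 : 0 < c) by nra.
  set (X := / (p * a)). set (Y := / (p * s)). set (Z := / (p * c)).
  set (W := / (s ^ 2 * (s ^ 4 - 1))) in *.
  assert (Hs4 : 0 < s ^ 4 - 1) by (replace (s ^ 4) with (s ^ 2 * s ^ 2) by ring; nra).
  assert (HW : 0 < W) by (apply Rinv_0_lt_compat, Rmult_lt_0_compat; lra).
  assert (HXZ : X * Z = / p ^ 2 * / (a * c)) by (unfold X, Z; field; lra).
  assert (HY2 : Y ^ 2 = / p ^ 2 * / s ^ 2) by (unfold Y; field; lra).
  assert (HX : 0 <= X) by (unfold X; left; apply Rinv_0_lt_compat; nra).
  assert (HZ : 0 <= Z) by (unfold Z; left; apply Rinv_0_lt_compat; nra).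
  assert (HY : 0 <= Y <= 1448/10000).
  { unfold Y. split; [left; apply Rinv_0_lt_compat; nra|].
    rewrite <- (Rinv_inv (1448/10000)). apply Rinv_le_contravar; [lra | nra]. }
  assert (Hp2 : 0 < / p ^ 2 <= 1015/10000).
  { split; [apply Rinv_0_lt_compat, pow_lt; lra|].
    rewrite <- (Rinv_inv (1015/10000)). apply Rinv_le_contravar; [lra | nra]. }
  assert (HY2XZ : Y ^ 2 <= X * Z) by (rewrite HXZ, HY2; apply Rmult_le_compat_l; lra).
  assert (Hsum : 2 * Y <= X + Z).
  { pose proof (pow2_ge_0 (X - Z)).
    assert (4 * Y ^ 2 <= (X + Z) ^ 2) by nra. nra. }
  assert (Hdiff : X * Z - Y ^ 2 <= / p ^ 2 * W) by (rewrite HXZ, HY2; nra).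
  assert (H1Y : 7313/10000 <= (1 - Y) ^ 2) by nra.
  assert (/ p ^ 2 * W <= (1 - Y) ^ 2 * (14/100 * W)).
  { apply Rle_trans with (1015/10000 * W); [apply Rmult_le_compat_r; lra|].
    rewrite <- Rmult_assoc. apply Rmult_le_compat_r; lra. }
  rewrite Rmult_plus_distr_l, Rmult_1_r. lra.
Qed.

(* The three factors of [fxyz] in [fxyz_le_asym], with [t = s^-3] and [v = s^-4]. *)
Lemma asym_rational_le t v : 0 <= t <= 94/1000 -> 0 <= v <= 5/11 * t ->
  / (1 + 785/1000 * t) * / (1 - v) * (1 + 14/100 * (t ^ 2 / (1 - v))) <= 1 - t / 4.
Proof.
  intros Ht Hv.
  assert (Hpoly : 1 - v + 14/100 * t ^ 2 <= (1 - t / 4) * (1 + 785/1000 * t) * (1 - v) ^ 2).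
  { set (q := (1 - t / 4) * (1 + 785/1000 * t)).
    assert (Hq : 1 + 5165/10000 * t <= q <= 10503/10000) by (unfold q; split; nra).
    assert (q * (1 - 2 * v) <= q * (1 - v) ^ 2) by (apply Rmult_le_compat_l; nra).
    assert (v * q <= 10503/10000 * v) by nra.
    assert (t ^ 2 <= 94/1000 * t) by nra.
    nra. }
  replace (/ (1 + 785/1000 * t) * / (1 - v) * (1 + 14/100 * (t ^ 2 / (1 - v))))
    with ((1 - v + 14/100 * t ^ 2) / ((1 + 785/1000 * t) * (1 - v) ^ 2)) by (field; lra).
  apply Rcomplements.Rle_div_l; [apply Rmult_lt_0_compat; [lra | apply pow_lt; lra]|].
  lra.
Qed.

Lemma Pm_Pp_fraction_le_asym s a c p :
  11/5 <= s -> 0 <= a -> 0 <= c -> a ^ 2 = s ^ 2 - 1 -> c ^ 2 = s ^ 2 + 1 -> 314/100 <= p ->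
  0 <= Pm (/ (p * a)) * Pm (/ (p * c)) / Pp (/ (p * s)) ^ 2
       <= 1 + 14/100 * / (s ^ 2 * (s ^ 4 - 1)).
Proof.
  intros Hs Ha Hc Ha2 Hc2 Hp.
  assert (Hs4 : 0 < s ^ 4 - 1) by (replace (s ^ 4) with (s ^ 2 * s ^ 2) by ring; nra).
  destruct (inv_le_third (p * a) ltac:(assert (19/10 <= a) by nra; nra)) as [Xlo Xhi].
  destruct (inv_le_third (p * c) ltac:(assert (2 <= c) by nra; nra)) as [Zlo Zhi].
  destruct (inv_le_third (p * s) ltac:(nra)) as [Ylo Yhi].
  pose proof (Pm_pos _ (conj Xlo Xhi)). pose proof (Pm_pos _ (conj Zlo Zhi)).
  pose proof (Pp_pos _ (conj Ylo Yhi)).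
  assert (Pm (/ (p * a)) <= 1 - / (p * a)) by (unfold Pm; pose proof (pow_le _ 6 Xlo); lra).
  assert (Pm (/ (p * c)) <= 1 - / (p * c)) by (unfold Pm; pose proof (pow_le _ 6 Zlo); lra).
  assert (1 - / (p * s) <= Pp (/ (p * s))) by (unfold Pp; pose proof (pow_le _ 6 Ylo); lra).
  split; [left; apply Rdiv_lt_0_compat; [apply Rmult_lt_0_compat | apply pow_lt]; lra|].
  apply Rcomplements.Rle_div_l; [apply pow_lt; lra|].
  apply Rle_trans with ((1 - / (p * a)) * (1 - / (p * c))); [apply Rmult_le_compat; lra|].
  eapply Rle_trans; [apply (cross_term_le s a c p); lra|].
  rewrite Rmult_comm. apply Rmult_le_compat_l.
  - pose proof (Rinv_0_lt_compat (s ^ 2 * (s ^ 4 - 1)) ltac:(nra)). lra.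
  - apply pow_incr. lra.
Qed.

Lemma inv_pow_bounds s : 11/5 <= s -> 0 <= / s ^ 3 <= 94/1000 /\ 0 <= / s ^ 4 <= 5/11 * / s ^ 3.
Proof.
  intros Hs.
  assert (Ht : 0 <= / s ^ 3 <= 94/1000).
  { split; [left; apply Rinv_0_lt_compat, pow_lt; lra|].
    rewrite <- (Rinv_inv (94/1000)). apply Rinv_le_contravar; [lra|].
    replace (/ (94/1000)) with (1000/94) by field.
    apply Rle_trans with ((11/5) ^ 3); [lra | apply pow_incr; lra]. }
  split; [exact Ht|].
  replace (/ s ^ 4) with (/ s * / s ^ 3) by (field; lra).
  assert (0 < / s <= 5/11).
  { split; [apply Rinv_0_lt_compat | rewrite <- (Rinv_inv (5/11)); apply Rinv_le_contravar]; lra. }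
  nra.
Qed.

Lemma fxyz_le_asym s a c p :
  11/5 <= s -> 0 <= a -> 0 <= c -> a ^ 2 = s ^ 2 - 1 -> c ^ 2 = s ^ 2 + 1 -> 314/100 <= p ->
  fxyz (p * a) (p * s) (p * c) <= 1 - / (4 * s ^ 3).
Proof.
  intros Hs Ha Hc Ha2 Hc2 Hp.
  assert (Hs4 : 0 < s ^ 4 - 1) by (replace (s ^ 4) with (s ^ 2 * s ^ 2) by ring; nra).
  destruct (inv_pow_bounds s Hs) as [Ht Hv].
  set (t := / s ^ 3) in *. set (v := / s ^ 4) in *.
  assert (HA : (p * s) ^ 4 / ((p * a) ^ 2 * (p * c) ^ 2) = / (1 - v)).
  { rewrite !Rpow_mult_distr, Ha2, Hc2. unfold v. field. repeat split; nra. }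
  assert (HE : exp (p * a - 2 * (p * s) + p * c) <= / (1 + 785/1000 * t)).
  { eapply Rle_trans; [apply (exp_second_difference_le s a c p); lra|].
    apply Rinv_le_contravar; [lra|].
    replace (p / (4 * s ^ 3)) with (p / 4 * t) by (unfold t; field; lra).
    apply Rplus_le_compat_l, Rmult_le_compat_r; lra. }
  destruct (Pm_Pp_fraction_le_asym s a c p) as [HB0 HB]; try assumption.
  replace (/ (s ^ 2 * (s ^ 4 - 1))) with (t ^ 2 / (1 - v)) in HB
    by (unfold t, v; field; split; lra).
  pose proof (exp_pos (p * a - 2 * (p * s) + p * c)).
  replace (1 - / (4 * s ^ 3)) with (1 - t / 4) by (unfold t; field; lra).
  eapply Rle_trans; [|apply (asym_rational_le t v Ht Hv)].
  unfold fxyz. rewrite HA.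
  apply Rmult_le_compat; [| exact HB0 | | exact HB].
  - apply Rmult_le_pos; [lra | left; apply Rinv_0_lt_compat; lra].
  - apply Rmult_le_compat_r; [left; apply Rinv_0_lt_compat; lra | exact HE].
Qed.

Lemma kxyz_le_asym x y z : 6 <= x <= y -> x <= z -> kxyz x y z <= 1 + 101/10 * / x ^ 6.
Proof.
  intros Hxy Hxz.
  destruct (inv_antitone x y ltac:(lra)) as [Hy0 Hyx].
  destruct (inv_antitone x z ltac:(lra)) as [Hz0 Hzx].
  assert (Hu : 0 <= / x <= 1/6) by (split; [lra | rewrite Rdiv_1_l; apply Rinv_le_contravar; lra]).
  assert (Hr : forall w, 0 <= w <= / x -> 1 <= ratio w <= ratio (/ x)).
  { intros w Hw. split; [apply ratio_ge_1; lra | apply ratio_monotone; lra]. }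
  destruct (Hr _ (conj Hy0 Hyx)), (Hr _ (conj Hz0 Hzx)).
  set (e := 5/2 * (/ x) ^ 6).
  assert (He : 0 <= e <= 1/10000).
  { pose proof (pow6_small (/ x) ltac:(lra)).
    assert ((/ x) ^ 6 <= (1/6) ^ 6) by (apply pow_incr; lra). unfold e. lra. }
  assert (Hrx : 1 <= ratio (/ x) <= 1 + e) by (split; [lra | apply ratio_le; lra]).
  apply Rle_trans with (ratio (/ x) ^ 4).
  - unfold kxyz.
    replace (ratio (/ x) ^ 4) with (ratio (/ x) * ratio (/ x) * ratio (/ x) ^ 2) by ring.
    apply Rmult_le_compat; [nra | apply pow_le; lra | apply Rmult_le_compat; lra |].
    apply pow_incr; lra.
  - apply Rle_trans with ((1 + e) ^ 4); [apply pow_incr; lra|].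
    rewrite <- pow_inv. replace (101/10 * (/ x) ^ 6) with (404/100 * e) by (unfold e; field; lra).
    clearbody e. assert (e ^ 2 <= e / 10000) by nra. assert (e ^ 3 <= e ^ 2) by nra.
    assert (e ^ 4 <= e ^ 3) by nra. nra.
Qed.

Lemma sqrt_neighbours m : (5 <= m)%nat ->
  11/5 <= sqrt (INR m) /\ 0 <= sqrt (INR m - 1) /\ 0 <= sqrt (INR m + 1) /\
  sqrt (INR m - 1) ^ 2 = sqrt (INR m) ^ 2 - 1 /\ sqrt (INR m + 1) ^ 2 = sqrt (INR m) ^ 2 + 1.
Proof.
  intros Hm. apply le_INR in Hm. simpl in Hm.
  rewrite !pow2_sqrt by lra.
  repeat split; try apply sqrt_pos; try ring.
  rewrite <- (sqrt_pow2 (11/5)) by lra. apply sqrt_le_1_alt. lra.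
Qed.

Lemma f_le_asym m : (5 <= m)%nat -> Defs.f m <= 1 - / (4 * sqrt (INR m) ^ 3).
Proof.
  intros Hm. destruct (sqrt_neighbours m Hm) as (Hs & Ha & Hc & Ha2 & Hc2).
  rewrite f_eq_fxyz by lia. unfold xm, ym, zm.
  apply fxyz_le_asym; try assumption.
  pose proof PI_bracket. unfold pi_lo in *. lra.
Qed.

Lemma gf_ratio_le_asym m : (5 <= m)%nat -> gf_ratio m <= 1 + / (90 * (INR m - 1) ^ 3).
Proof.
  intros Hm. destruct (sqrt_neighbours m Hm) as (Hs & Ha & Hc & Ha2 & Hc2).
  pose proof PI_bracket as Hpi. unfold pi_lo, pi_hi in Hpi.
  assert (HM : 5 <= INR m) by (apply le_INR in Hm; simpl in Hm; lra).
  set (a := sqrt (INR m - 1)) in *. set (s := sqrt (INR m)) in *. set (c := sqrt (INR m + 1)) in *.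
  assert (Ha2' : a ^ 2 = INR m - 1) by (unfold a; apply pow2_sqrt; lra).
  assert (Hpa : 6 <= PI * a) by (assert (2 <= a) by nra; nra).
  unfold gf_ratio, xm, ym, zm. fold a s c.
  eapply Rle_trans; [apply kxyz_le_asym; nra|].
  apply Rplus_le_compat_l.
  replace ((PI * a) ^ 6) with (PI ^ 6 * (INR m - 1) ^ 3) by (rewrite <- Ha2'; ring).
  assert (Hpi6 : 950 <= PI ^ 6).
  { apply Rle_trans with ((31415/10000) ^ 6); [lra | apply pow_incr; lra]. }
  assert (Hm3 : 0 < (INR m - 1) ^ 3) by (apply pow_lt; lra).
  rewrite !Rinv_mult, <- Rmult_assoc.
  apply Rmult_le_compat_r; [left; apply Rinv_0_lt_compat, Hm3|].
  assert (/ PI ^ 6 <= / 950) by (apply Rinv_le_contravar; lra).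
  lra.
Qed.

Lemma asym_bounds_combine N s1 s2 : 6 <= N -> 0 < s1 -> 0 < s2 -> s1 * s2 <= N ->
  (1 - / (4 * s1 ^ 3)) * / (90 * (N - 2) ^ 3) + (1 - / (4 * s2 ^ 3)) * / (90 * N ^ 3)
  < / (4 * s1 ^ 3) * / (4 * s2 ^ 3).
Proof.
  intros HN Hs1 Hs2 Hprod.
  assert (H1 : 0 < / (4 * s1 ^ 3)) by (apply Rinv_0_lt_compat; pose proof (pow_lt s1 3 Hs1); lra).
  assert (H2 : 0 < / (4 * s2 ^ 3)) by (apply Rinv_0_lt_compat; pose proof (pow_lt s2 3 Hs2); lra).
  assert (HN3 : 0 < N ^ 3) by (apply pow_lt; lra).
  assert (Hcub : N ^ 3 <= 27/8 * (N - 2) ^ 3).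
  { replace (27/8 * (N - 2) ^ 3) with ((3/2 * (N - 2)) ^ 3) by field. apply pow_incr. lra. }
  assert (HP : / (90 * (N - 2) ^ 3) <= 27/720 * / N ^ 3).
  { replace (27/720 * / N ^ 3) with (/ (90 * (8/27 * N ^ 3))) by (field; lra).
    apply Rinv_le_contravar; [apply Rmult_lt_0_compat; lra | lra]. }
  assert (HQ : / (90 * N ^ 3) = 1/90 * / N ^ 3) by (field; lra).
  assert (HAB : / N ^ 3 / 16 <= / (4 * s1 ^ 3) * / (4 * s2 ^ 3)).
  { rewrite <- Rinv_mult. unfold Rdiv. rewrite <- Rinv_mult.
    apply Rinv_le_contravar.
    - pose proof (pow_lt s1 3 Hs1). pose proof (pow_lt s2 3 Hs2). nra.
    - replace (4 * s1 ^ 3 * (4 * s2 ^ 3)) with (16 * (s1 * s2) ^ 3) by ring.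
      assert ((s1 * s2) ^ 3 <= N ^ 3) by (apply pow_incr; nra). lra. }
  pose proof (Rinv_0_lt_compat (N ^ 3) HN3).
  assert (0 < / (90 * (N - 2) ^ 3))
    by (apply Rinv_0_lt_compat, Rmult_lt_0_compat; [lra | apply pow_lt; lra]).
  assert ((1 - / (4 * s1 ^ 3)) * / (90 * (N - 2) ^ 3) <= 1 * / (90 * (N - 2) ^ 3))
    by (apply Rmult_le_compat_r; lra).
  assert ((1 - / (4 * s2 ^ 3)) * / (90 * N ^ 3) <= 1 * / (90 * N ^ 3))
    by (apply Rmult_le_compat_r; [rewrite HQ|]; lra).
  lra.
Qed.

Lemma s2_lt_1_large n : (6 <= n)%nat -> s2 n < 1.
Proof.
  intros Hn.
  pose proof (f_le_asym (n - 1) ltac:(lia)) as Hf1.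
  pose proof (gf_ratio_le_asym (n - 1) ltac:(lia)) as Hk1.
  pose proof (f_le_asym (n + 1) ltac:(lia)) as Hf2.
  pose proof (gf_ratio_le_asym (n + 1) ltac:(lia)) as Hk2.
  rewrite minus_INR in Hf1, Hk1 by lia. rewrite plus_INR in Hf2, Hk2. simpl INR in *.
  assert (HN : 6 <= INR n) by (apply le_INR in Hn; simpl in Hn; lra).
  set (N := INR n) in *.
  replace (N - 1 - 1) with (N - 2) in Hk1 by ring. replace (N + 1 - 1) with N in Hk2 by ring.
  assert (Hs1 : 0 < sqrt (N - 1)) by (apply sqrt_lt_R0; lra).
  assert (Hs2 : 0 < sqrt (N + 1)) by (apply sqrt_lt_R0; lra).
  assert (Hprod : sqrt (N - 1) * sqrt (N + 1) <= N).
  { rewrite <- sqrt_mult by lra.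
    apply Rle_trans with (sqrt (N ^ 2)); [apply sqrt_le_1_alt; nra | rewrite sqrt_pow2; lra]. }
  pose proof (asym_bounds_combine N _ _ HN Hs1 Hs2 Hprod) as Hnum.
  set (s1 := sqrt (N - 1)) in *. set (s2 := sqrt (N + 1)) in *.
  assert (0 < / (4 * s1 ^ 3)) by (apply Rinv_0_lt_compat; pose proof (pow_lt s1 3 Hs1); lra).
  assert (0 < / (4 * s2 ^ 3)) by (apply Rinv_0_lt_compat; pose proof (pow_lt s2 3 Hs2); lra).
  apply (s2_lt_1_of_bounds n _ _ _ _ ltac:(lia) Hf1 Hk1 Hf2 Hk2); lra.
Qed.

Theorem theorem2p5 : forall n : nat, (3 <= n)%nat -> s2 n < 1.
Proof.
  intros n Hn.
  destruct (Nat.le_gt_cases 6 n) as [Hlarge | Hsmall].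
  - apply s2_lt_1_large, Hlarge.
  - apply s2_lt_1_small. lia.
Qed.
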